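(* Let $\tilde{\mathcal E}\ge0$ be a hermitian operator on $\mathbb C^\Lambda$ whose off-diagonal matrix elements are negative. For $h$ real, let $\mathcal Q_4(h)$ be the block matrix indexed by $j,j'\in\{0,\dots,n_\tau\}$ with $$\mathcal Q_4(h)_{j,j'}=\delta_{j,j'}\big(\mathbf 1+\epsilon\tilde{\mathcal E}-i\sqrt\epsilon\,h_j\big)-\delta_{j+1,j'}\mathbf 1 .$$ Then $\mathcal C_4(h)=\mathcal Q_4(h)^{-1}$ satisfies, for all real $h$ and all $j,j',x,x'$, $$\big|\mathcal C_4(h)_{(j,x),(j',x')}\big|\le\mathcal C_4(0)_{(j,x),(j',x')},$$ and the right hand side is bounded uniformly in $n_\tau$ (and in $j,j',x,x'$).
   Context: $\Lambda$ is a finite discrete torus $\mathbb Z^d/L\mathbb Z^d$ (spacing $1$); operators on $\mathbb C^\Lambda$ are identified with their matrices and functions on $\Lambda$ (in particular $h_j\in\mathbb R^\Lambda$) act as multiplication operators. $\beta>0$ is fixed, $n_\tau\in\mathbb N$, $\epsilon=\beta/n_\tau$, $h=(h_j)_{j=1}^{n_\tau}$ with $h_j\in\mathbb R^\Lambda$ and the convention $h_0=0$. Matrix elements $\mathcal C_4(h)_{(j,x),(j',x')}$ refer to the standard basis of $(\mathbb C^\Lambda)^{n_\tau+1}$. *)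

From HB Require Import structures.
From mathcomp Require Import all_boot all_order all_algebra.
From mathcomp Require Import reals.
From mathcomp Require Export complex.
Unset Printing Implicit Defensive.
Import Order.TTheory GRing.Theory Num.Theory.
Local Open Scope ring_scope.
Local Open Scope complex_scope.

(* The discrete torus Lambda = Z^d / L Z^d, realised as functions 'I_d -> 'I_L
   (coordinates mod L).  Only its finiteness is used. *)
Definition torus (d L : nat) : finType := {ffun 'I_d -> 'I_L}.

Section Defs.
Variable R : realType.
Variables (d L : nat).
Local Notation Lam := (torus d L).
Local Notation C := (R[i]).

Definition herm_op (E : Lam -> Lam -> C) : Prop :=
  forall x y, E x y = (E y x)^*.

Definition psd (E : Lam -> Lam -> C) : Prop :=
  forall v : Lam -> C, 0 <= \sum_x \sum_y (v x)^* * E x y * v y.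

(* off-diagonal matrix elements are negative (<= 0, real) *)
Definition offdiag_nonpos (E : Lam -> Lam -> C) : Prop :=
  forall x y, x != y -> E x y <= 0.

Definition blk_idx (ntau : nat) : finType := prod 'I_ntau.+1 Lam.

Definition eps (beta : R) (ntau : nat) : R := beta / ntau%:R.

Definition hh (h : nat -> Lam -> R) (j : nat) (x : Lam) : R :=
  if j == 0%N then 0 else h j x.

Definition Q4_entry (beta : R) (ntau : nat) (E : Lam -> Lam -> C)
  (h : nat -> Lam -> R) (a b : blk_idx ntau) : C :=
  let: (j, x) := a in let: (j', x') := b in
  let e := eps beta ntau in
  if (j : nat) == j' then
    (x == x')%:R + (e%:C) * E x x'
      - 'i * (Num.sqrt e)%:C * (hh h j x)%:C * (x == x')%:R
  else if (j.+1 == j')%N then - (x == x')%:R else 0.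

Definition Q4 (beta : R) (ntau : nat) (E : Lam -> Lam -> C) (h : nat -> Lam -> R) : 'M[C]_#|blk_idx ntau| :=
  \matrix_(a, b) Q4_entry beta ntau E h (enum_val a) (enum_val b).

Definition C4 (beta : R) (ntau : nat) (E : Lam -> Lam -> C) (h : nat -> Lam -> R) : 'M[C]_#|blk_idx ntau| := invmx (Q4 beta ntau E h).

Definition C4_entry (beta : R) (ntau : nat) (E : Lam -> Lam -> C) (h : nat -> Lam -> R) (j : 'I_ntau.+1) (x : Lam)
  (j' : 'I_ntau.+1) (x' : Lam) : C :=
  C4 beta ntau E h (enum_rank ((j, x) : blk_idx ntau))
                   (enum_rank ((j', x') : blk_idx ntau)).

End Defs.

Arguments herm_op {R d L} E.
Arguments psd {R d L} E.
Arguments offdiag_nonpos {R d L} E.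
Arguments blk_idx {d L} ntau.
Arguments hh {R d L} h j x.
Arguments Q4_entry {R d L} beta ntau E h a b.
Arguments Q4 {R d L} beta ntau E h.
Arguments C4 {R d L} beta ntau E h.
Arguments C4_entry {R d L} beta ntau E h j x j' x'.

From mathcomp Require Import all_boot all_order all_algebra reals complex.
From mathcomp Require Import ring lra zify.
Import Order.TTheory GRing.Theory Num.Theory Normc.
Local Open Scope ring_scope.
Local Open Scope complex_scope.

(* Write Q_4(h) = Q - i sqrt(eps) diag(h) with the real matrix Q = Q_4(0),
   whose diagonal blocks are M = 1 + eps E and superdiagonal blocks -1.  M is a
   Z-matrix with <w, M w> >= |w|^2, hence inverse positive, and by back
   substitution over the blocks so is Q.  As the off-diagonal entries of Q_4(h)
   are those of Q, real and nonpositive, and |Q_aa - i t| >= Q_aa, Kato's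
   inequality Q |u| <= |Q_4(h) u| holds entrywise.  It makes Q_4(h) invertible,
   and on the columns of C_4(h) it gives Q |C_4(h)| <= 1 = Q C_4(0), whence
   |C_4(h)| <= C_4(0) by inverse positivity (C_4(0) is real for the same
   reason).  Finally the blocks of a column of C_4(0) satisfy
   M G_j = G_(j+1) + delta, and |M^-1 v| <= |v| bounds every entry by 1. *)

Definition opmul {K : pzRingType} {T : finType} (A : T -> T -> K) (w : T -> K)
  (x : T) : K :=
  \sum_y A x y * w y.

Lemma sum_delta_l {K : pzSemiRingType} {T : finType} (x : T) (f : T -> K) :
  \sum_y (x == y)%:R * f y = f x.
Proof.
rewrite (bigD1 x) //= eqxx mul1r big1 ?addr0 // => y.
by rewrite eq_sym => /negbTE ->; rewrite mul0r.
Qed.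

Section InversePositive.
Context {R : realFieldType} {T : finType}.
Implicit Types (A : T -> T -> R) (v w : T -> R).

Definition sqnorm w : R := \sum_x w x ^+ 2.

Definition offdiag_le0 A := forall x y, x != y -> A x y <= 0.

Definition coercive A := forall w, sqnorm w <= \sum_x w x * opmul A w x.

Definition inverse_positive A :=
  forall w, (forall x, 0 <= opmul A w x) -> forall x, 0 <= w x.

Lemma sqr_le_sqnorm w x : w x ^+ 2 <= sqnorm w.
Proof. by rewrite /sqnorm (bigD1 x) //= lerDl sumr_ge0 // => y _; rewrite sqr_ge0. Qed.

Lemma sqnorm_le0 w : sqnorm w <= 0 -> forall x, w x = 0.
Proof.
move=> w_le0 x; apply/eqP; rewrite -sqrf_eq0 eq_le sqr_ge0 andbT.
exact: le_trans (sqr_le_sqnorm w x) w_le0.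
Qed.

Lemma opmulB A v w x : opmul A (v \- w) x = opmul A v x - opmul A w x.
Proof. by rewrite /opmul -sumrB; apply: eq_bigr => y _; rewrite mulrBr. Qed.

(* [|w|^2 <= <w, Aw> <= (|w|^2 + |Aw|^2) / 2]. *)
Lemma coercive_sqnorm_le A w : coercive A -> sqnorm w <= sqnorm (opmul A w).
Proof.
move=> /(_ w) coerc.
have amgm : 2 * \sum_x w x * opmul A w x <= sqnorm w + sqnorm (opmul A w).
  rewrite mulr_sumr -big_split /=; apply: ler_sum => x _.
  by have := sqr_ge0 (w x - opmul A w x); rewrite sqrrB; lra.
lra.
Qed.

(* The negative part [m] of [w] satisfies [<m, Am> <= <m, Aw> <= 0]. *)
Lemma coercive_inverse_positive A :
  offdiag_le0 A -> coercive A -> inverse_positive A.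
Proof.
move=> A_off coerc w Aw_ge0 x.
pose m y := Num.max 0 (- w y).
have m_ge0 y : 0 <= m y by rewrite le_max lexx.
have wm_ge0 y : 0 <= w y + m y.
  by rewrite /m; case: (leP 0 (- w y)) => ?; lra.
have m_wm y : m y * (w y + m y) = 0.
  by rewrite /m; case: (leP 0 (- w y)) => ?; rewrite ?mul0r //; ring.
have cross : \sum_y m y * opmul A (w \+ m) y <= 0.
  apply: sumr_le0 => y _; rewrite mulr_sumr; apply: sumr_le0 => z _.
  have [<-|yz] := eqVneq y z; first by rewrite mulrCA m_wm mulr0.
  by rewrite mulrA mulr_le0_ge0 ?mulr_ge0_le0 ?A_off ?wm_ge0.
have mAm_le0 : \sum_y m y * opmul A m y <= 0.
  apply: le_trans cross; apply: ler_sum => y _; rewrite ler_wpM2l //.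
  rewrite -subr_ge0 -opmulB /opmul.
  by under eq_bigr => z _ do rewrite /= addrK; exact: Aw_ge0.
have := sqnorm_le0 m (le_trans (coerc m) mAm_le0) x.
by rewrite /m => /eqP; rewrite eq_maxl oppr_le0 => ->.
Qed.

Lemma inverse_positive_le A v w : inverse_positive A ->
  (forall x, opmul A v x <= opmul A w x) -> forall x, v x <= w x.
Proof.
move=> Apos Avw x; rewrite -subr_ge0.
by apply: (Apos (w \- v)) => y; rewrite opmulB subr_ge0.
Qed.

Lemma inverse_positive_eq A v w : inverse_positive A ->
  (forall x, opmul A v x = opmul A w x) -> forall x, v x = w x.
Proof.
move=> Apos Avw x; apply/le_anti.
by rewrite !(inverse_positive_le A) // => y; rewrite Avw.
Qed.

End InversePositive.

Lemma nat_down_ind (n : nat) (P : nat -> Prop) :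
  P n -> (forall j, (j < n)%N -> P j.+1 -> P j) -> forall j, (j <= n)%N -> P j.
Proof.
move=> Pn PS j /subnK; move: (n - j)%N => k.
elim: k j => [|k IH] j kjn; first by rewrite -kjn add0n in Pn.
by apply: PS; [lia | apply: IH; lia].
Qed.

Section BlockBidiagonal.
Context {R : realFieldType} {T : finType}.
Variables (M : T -> T -> R) (n : nat).
Local Notation I := ('I_n.+1 * T)%type.

Definition block_bidiag (a b : I) : R :=
  let: (j, x) := a in let: (j', x') := b in
  (j == j')%:R * M x x' - (j.+1 == j')%:R * (x == x')%:R.

(* Blocks are indexed by [nat], so that [block v n.+1 = 0] ends the recursion. *)
Definition block (v : I -> R) (j : nat) (x : T) : R :=
  if (j < n.+1)%N then v (inord j, x) else 0.

Lemma block_ord v (j : 'I_n.+1) x : block v j x = v (j, x).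
Proof. by rewrite /block ltn_ord inord_val. Qed.

Lemma block_out v x : block v n.+1 x = 0.
Proof. by rewrite /block ltnn. Qed.

Lemma sum_ord_delta_l (k : nat) (g : 'I_n.+1 -> R) :
  \sum_(j : 'I_n.+1) (k == j)%:R * g j = if (k < n.+1)%N then g (inord k) else 0.
Proof.
case: ifP => [lt_kn | /negbT ge_kn].
  rewrite (bigD1 (inord k)) //= inordK // eqxx mul1r big1 ?addr0 // => j ne_jk.
  by rewrite eq_sym -(inj_eq val_inj) /= inordK // in ne_jk; rewrite (negbTE ne_jk) mul0r.
rewrite big1 // => j _; case: eqP => [kj|]; last by rewrite mul0r.
by rewrite kj ltn_ord in ge_kn.
Qed.

Lemma opmul_block_bidiag v (j : 'I_n.+1) x :
  opmul block_bidiag v (j, x) = opmul M (block v j) x - block v j.+1 x.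
Proof.
rewrite /opmul (eq_bigr (fun c => block_bidiag (j, x) (c.1, c.2) * v (c.1, c.2)));
  last by case.
rewrite -(pair_bigA _ (fun j' y => block_bidiag (j, x) (j', y) * v (j', y))) /=.
under eq_bigr => j' _.
  rewrite (eq_bigr (fun y => (j == j')%:R * (M x y * v (j', y))
                             - ((j : nat).+1 == j')%:R * ((x == y)%:R * v (j', y))));
    last by move=> y _; ring.
  rewrite sumrB -mulr_sumr -mulr_sumr sum_delta_l.
  over.
rewrite sumrB sum_delta_l sum_ord_delta_l; congr (_ - _).
by apply: eq_bigr => y _; rewrite block_ord.
Qed.

Lemma block_bidiag_offdiag_le0 : offdiag_le0 M -> offdiag_le0 block_bidiag.
Proof.
move=> M_off [j x] [j' x']; rewrite xpair_eqE /block_bidiag.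
have [<- /= ne_xx'|ne_jj' _] := eqVneq j j'.
  by rewrite (gtn_eqF (ltnSn _)) mul1r mul0r subr0 M_off.
by rewrite mul0r sub0r oppr_le0 mulr_ge0 ?ler0n.
Qed.

Lemma block_bidiag_inverse_positive :
  inverse_positive M -> inverse_positive block_bidiag.
Proof.
move=> Mpos v Qv_ge0.
have block_ge0 : forall j, (j <= n.+1)%N -> forall x, 0 <= block v j x.
  apply: (@nat_down_ind _ (fun j => forall x, 0 <= block v j x)) => [x|j lt_jn IH].
    by rewrite block_out.
  apply: Mpos => x; have := Qv_ge0 (inord j, x).
  by rewrite opmul_block_bidiag !inordK //; have := IH x; lra.
by case=> j x; rewrite -block_ord block_ge0 // ltnW.
Qed.

(* The blocks of the column solve [M G_j = G_(j+1) + [j = j0] e_y0]; since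
   [|G_j| <= |M G_j|], descending induction gives [|G_j|^2 <= [j <= j0]]. *)
Lemma block_bidiag_col_le1 (g : I -> R) (j0 : 'I_n.+1) (y0 : T) :
  coercive M -> (forall a, opmul block_bidiag g a = (a == (j0, y0))%:R) ->
  forall a, g a <= 1.
Proof.
move=> Mcoerc Qg.
pose G := block g.
have MG j x : (j < n.+1)%N ->
    opmul M (G j) x = G j.+1 x + ((j == j0) && (x == y0))%:R.
  move=> lt_jn; have := Qg (inord j, x).
  rewrite opmul_block_bidiag !inordK // xpair_eqE -(inj_eq val_inj) /= inordK //.
  by move=> <-; rewrite /G addrC subrK.
have G_sqnorm : forall j, (j <= n.+1)%N -> sqnorm (G j) <= (j <= j0)%:R.
  apply: (@nat_down_ind _ (fun j => sqnorm (G j) <= (j <= j0)%:R)).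
    by rewrite /sqnorm big1 // => x _; rewrite /G block_out expr2 mulr0.
  move=> j lt_jn IH; apply: le_trans (coercive_sqnorm_le M (G j) Mcoerc) _.
  have [jj0|ne_jj0] := eqVneq j (nat_of_ord j0).
    rewrite jj0 ltnn in IH; have G0 := sqnorm_le0 _ IH.
    rewrite jj0 leqnn /sqnorm (eq_bigr (fun x => (y0 == x)%:R * 1)) ?sum_delta_l //.
    move=> x _; rewrite MG // G0 add0r eqxx eq_sym mulr1.
    by case: (y0 == x); rewrite ?expr1n ?expr0n.
  rewrite /sqnorm (eq_bigr (fun x => G j.+1 x ^+ 2)) => [|x _]; last first.
    by rewrite MG // (negbTE ne_jj0) addr0.
  apply: le_trans IH _; rewrite ler_nat.
  by case: ltnP => // /ltnW ->.
case=> j x; rewrite -block_ord -/G.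
have := le_trans (sqr_le_sqnorm (G j) x) (G_sqnorm j (ltnW (ltn_ord j))).
have : ((j <= j0)%N%:R : R) <= 1 by case: (j <= j0)%N.
nra.
Qed.

End BlockBidiagonal.

Section ComplexModulus.
Context {R : rcfType}.

Lemma normc_ge0 (z : R[i]) : 0 <= normc z.
Proof. by rewrite -ler0c -[(normc z)%:C]/`|z|. Qed.

Lemma normc_real (r : R) : normc r%:C = `|r|.
Proof. by rewrite -[LHS]/(complex.Re `|r%:C|) normc_def /= expr0n addr0 sqrtr_sqr. Qed.

Lemma normc_sum_le {I : finType} (P : pred I) (F : I -> R[i]) :
  normc (\sum_(c | P c) F c) <= \sum_(c | P c) normc (F c).
Proof.
rewrite -lecR rmorph_sum.
by change (`|\sum_(c | P c) F c| <= \sum_(c | P c) `|F c|); exact: ler_norm_sum.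
Qed.

Lemma normcB_le (y z : R[i]) : normc (y - z) <= normc y + normc z.
Proof. by rewrite -(normcN z); exact: le_normcD. Qed.

Lemma le_normc_subi (x t : R) : x <= normc (x%:C - 'i * t%:C).
Proof.
rewrite /normc /= !(mul0r, mul1r, mulr0, subr0, sub0r, add0r, addr0, oppr0).
apply: le_trans (ler_norm x) _.
by rewrite -sqrtr_sqr ler_sqrt ?addr_ge0 ?sqr_ge0 // lerDl sqr_ge0.
Qed.

End ComplexModulus.

Section Domination.
Context {R : rcfType} {I : finType}.
Variables (q : I -> I -> R) (Q : I -> I -> R[i]).
Hypothesis q_off : offdiag_le0 q.
Hypothesis Q_off : forall a c, a != c -> Q a c = (q a c)%:C.
Hypothesis Q_diag : forall a, q a a <= normc (Q a a).

(* Kato's inequality [q |u| <= |Q u|]: isolate the diagonal term of [(Q u)_a]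
   and use that the off-diagonal coefficients are real and nonpositive. *)
Lemma opmul_normc_le u a :
  opmul q (fun c => normc (u c)) a <= normc (opmul Q u a).
Proof.
have Q_split : Q a a * u a = opmul Q u a - \sum_(c | c != a) (q a c)%:C * u c.
  rewrite /opmul (bigD1 a) //= (eq_bigr (fun c => (q a c)%:C * u c)) ?addrK //.
  by move=> c ne_ca; rewrite Q_off // eq_sym.
have diag : q a a * normc (u a) <=
    normc (opmul Q u a) + \sum_(c | c != a) normc ((q a c)%:C * u c).
  apply: le_trans (_ : normc (Q a a) * normc (u a) <= _).
    by rewrite ler_wpM2r ?normc_ge0.
  rewrite -normcM Q_split; apply: le_trans (normcB_le _ _) _.
  by rewrite lerD2l normc_sum_le.
have off : \sum_(c | c != a) normc ((q a c)%:C * u c) =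
    - \sum_(c | c != a) q a c * normc (u c).
  rewrite -sumrN; apply: eq_bigr => c ne_ca.
  by rewrite normcM normc_real ler0_norm ?mulNr // q_off // eq_sym.
rewrite /opmul (bigD1 a) //=; lra.
Qed.

Lemma inverse_positive_dominates u g : inverse_positive q ->
  (forall a, opmul q g a = normc (opmul Q u a)) ->
  forall a, normc (u a) <= g a.
Proof.
move=> qpos qg; apply: (inverse_positive_le q) => // a.
by rewrite qg opmul_normc_le.
Qed.

Lemma inverse_positive_kernel u : inverse_positive q ->
  (forall a, opmul Q u a = 0) -> forall a, u a = 0.
Proof.
move=> qpos Qu a; apply: eq0_normc; apply/le_anti; rewrite normc_ge0 andbT.
apply: (inverse_positive_dominates u (fun _ => 0) qpos) => b.
by rewrite Qu normc0 /opmul big1 // => c _; rewrite mulr0.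
Qed.

End Domination.

Section RealCoefficients.
Context {R : rcfType} {I : finType}.
Variable q : I -> I -> R.

Lemma opmul_realC (u : I -> R[i]) a :
  opmul (fun a c => (q a c)%:C) u a =
  opmul q (fun c => complex.Re (u c)) a +i* opmul q (fun c => complex.Im (u c)) a.
Proof.
rewrite /opmul; apply/eqP; rewrite eq_complex.
rewrite (raddf_sum (@complex.Re R : Rcomplex R -> R)).
rewrite (raddf_sum (@complex.Im R : Rcomplex R -> R)).
by apply/andP; split; apply/eqP/eq_bigr => c _; case: (u c) => x y /=;
  rewrite mul0r ?subr0 ?addr0.
Qed.

(* With real inverse-positive coefficients and a real right-hand side the
   imaginary part solves the homogeneous system, hence vanishes. *)
Lemma inverse_positive_real_solution (u : I -> R[i]) (f : I -> R) :
  inverse_positive q -> (forall a, opmul (fun a c => (q a c)%:C) u a = (f a)%:C) ->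
  (forall a, u a = (complex.Re (u a))%:C) /\
  (forall a, opmul q (fun c => complex.Re (u c)) a = f a).
Proof.
move=> qpos Qu; split => [a|a]; last by have := Qu a; rewrite opmul_realC => -[].
have Im0 : forall c, complex.Im (u c) = 0.
  apply: (inverse_positive_eq q _ (fun _ => 0) qpos) => b.
  have := Qu b; rewrite opmul_realC => -[_ ->].
  by rewrite /opmul big1 // => c _; rewrite mulr0.
by move: (Im0 a); case: (u a) => x y /= ->.
Qed.

End RealCoefficients.

Section FunctionMatrix.
Context {K : fieldType} {I : finType}.

Definition mx_of_fun (F : I -> I -> K) : 'M[K]_#|I| :=
  \matrix_(a, b) F (enum_val a) (enum_val b).

Lemma sum_enum_val (G : I -> K) : \sum_(k < #|I|) G (enum_val k) = \sum_c G c.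
Proof. by rewrite -big_enum_val. Qed.

Lemma mx_of_fun_unit F :
  (forall u, (forall a, opmul F u a = 0) -> forall a, u a = 0) ->
  mx_of_fun F \in unitmx.
Proof.
move=> F_inj; rewrite unitmxE unitfE -det_tr; apply/negP => /det0P [v v_neq0 vF0].
pose u c := v 0 (enum_rank c).
have Fu0 a : opmul F u a = 0.
  move/matrixP: vF0 => /(_ 0 (enum_rank a)); rewrite !mxE => vF.
  rewrite -[RHS]vF /opmul -sum_enum_val.
  by apply: eq_bigr => k _; rewrite !mxE enum_rankK /u enum_valK mulrC.
move/eqP: v_neq0; apply; apply/rowP => k; rewrite mxE.
by have := F_inj u Fu0 (enum_val k); rewrite /u enum_valK.
Qed.

Lemma opmul_invmx_col F b a : mx_of_fun F \in unitmx ->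
  opmul F (fun c => invmx (mx_of_fun F) (enum_rank c) (enum_rank b)) a = (a == b)%:R.
Proof.
move=> /mulmxV /matrixP /(_ (enum_rank a) (enum_rank b)).
rewrite !mxE (inj_eq enum_rank_inj) /opmul -sum_enum_val => <-.
by apply: eq_bigr => k _; rewrite !mxE enum_rankK enum_valK.
Qed.

End FunctionMatrix.

Section C4Bounds.
Context {R : realType} {d L : nat}.
Local Notation Lam := (torus d L).
Variable E : Lam -> Lam -> R[i].
Hypotheses (E_herm : herm_op E) (E_psd : psd E) (E_off : offdiag_nonpos E).

Lemma herm_offdiag_real x y : E x y = (complex.Re (E x y))%:C.
Proof.
have [<-|ne_xy] := eqVneq x y.
  by have := E_herm x x; case: (E x x) => a b /= [] b0; congr (_ +i* _); lra.
by have := E_off x y ne_xy; rewrite lecE /=; case: (E x y) => a b /= /andP[/eqP <-].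
Qed.

Definition one_plus_epsE (e : R) (x y : Lam) : R :=
  (x == y)%:R + e * complex.Re (E x y).

Lemma one_plus_epsE_offdiag_le0 e : 0 <= e -> offdiag_le0 (one_plus_epsE e).
Proof.
move=> e_ge0 x y ne_xy; rewrite /one_plus_epsE (negbTE ne_xy) add0r.
by have := E_off x y ne_xy; rewrite lecE => /andP[_ ReE_le0]; rewrite mulr_ge0_le0.
Qed.

Lemma one_plus_epsE_coercive e : 0 <= e -> coercive (one_plus_epsE e).
Proof.
move=> e_ge0 w; pose S x := \sum_y complex.Re (E x y) * w y.
have opM x : opmul (one_plus_epsE e) w x = w x + e * S x.
  rewrite /opmul (eq_bigr (fun y => (x == y)%:R * w y + e * (complex.Re (E x y) * w y))).
    by rewrite big_split /= sum_delta_l -mulr_sumr.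
  by move=> y _; rewrite /one_plus_epsE; ring.
have form_ge0 : 0 <= \sum_x w x * S x.
  have := E_psd (fun x => (w x)%:C); rewrite -ler0c; congr (_ <= _).
  rewrite (rmorph_sum (real_complex R)); apply: eq_bigr => x _.
  rewrite /S mulr_sumr (rmorph_sum (real_complex R)); apply: eq_bigr => y _.
  rewrite {1}herm_offdiag_real conj_Creal ?complex_real //.
  by rewrite -!rmorphM mulrA.
rewrite (eq_bigr (fun x => w x ^+ 2 + e * (w x * S x))) => [|x _]; last first.
  by rewrite opM; ring.
by rewrite big_split /= -mulr_sumr lerDl mulr_ge0.
Qed.

Variables (beta : R) (n : nat).
Hypothesis beta_ge0 : 0 <= beta.
Local Notation e := (@eps R beta n).
Local Notation q := (block_bidiag (one_plus_epsE e) n).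
Local Notation h0 := (fun (_ : nat) (_ : Lam) => 0 : R).
Local Notation C4at h a b := (C4 beta n E h (enum_rank a) (enum_rank b)).

Lemma eps_ge0 : 0 <= e.
Proof. by rewrite divr_ge0. Qed.

Lemma Q4_entryE h (a c : blk_idx n) : Q4_entry beta n E h a c =
  (q a c)%:C - 'i * (Num.sqrt e * hh h a.1 a.2)%:C * (a == c)%:R.
Proof.
case: a c => j x [j' x'] /=; rewrite /Q4_entry /block_bidiag /one_plus_epsE xpair_eqE.
rewrite herm_offdiag_real.
have [<-|ne_jj'] := eqVneq j j'.
  rewrite (gtn_eqF (ltnSn _)) eqxx /= mul1r mul0r subr0.
  by rewrite rmorphD !rmorphM !rmorph_nat; ring.
have ne_jj'_nat : (j : nat) != j' := ne_jj'.
rewrite (negbTE ne_jj'_nat) /= mul0r mulr0 subr0 sub0r.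
by case: (j.+1 == j'); rewrite ?mul1r ?mul0r ?oppr0 ?rmorphN ?rmorph_nat.
Qed.

Lemma Q4_entry0 (a c : blk_idx n) : Q4_entry beta n E h0 a c = (q a c)%:C.
Proof. by rewrite Q4_entryE /hh; case: ifP => _; rewrite mulr0 mulr0 mul0r subr0. Qed.

Lemma q_offdiag_le0 : offdiag_le0 q.
Proof. exact/block_bidiag_offdiag_le0/one_plus_epsE_offdiag_le0/eps_ge0. Qed.

Lemma q_inverse_positive : inverse_positive q.
Proof.
apply/block_bidiag_inverse_positive/coercive_inverse_positive.
  exact/one_plus_epsE_offdiag_le0/eps_ge0.
exact/one_plus_epsE_coercive/eps_ge0.
Qed.

Lemma Q4_entry_offdiag h (a c : blk_idx n) :
  a != c -> Q4_entry beta n E h a c = (q a c)%:C.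
Proof. by move=> ne_ac; rewrite Q4_entryE (negbTE ne_ac) mulr0 subr0. Qed.

Lemma Q4_entry_diag h (a : blk_idx n) : q a a <= normc (Q4_entry beta n E h a a).
Proof. by rewrite Q4_entryE eqxx mulr1 le_normc_subi. Qed.

Lemma opmul_C4_col h b a :
  opmul (Q4_entry beta n E h) (fun c => C4at h c b) a = (a == b)%:R.
Proof.
apply/opmul_invmx_col/mx_of_fun_unit => u.
exact: (inverse_positive_kernel _ _ q_offdiag_le0 (Q4_entry_offdiag h)
          (Q4_entry_diag h) u q_inverse_positive).
Qed.

Lemma C4_0_col b :
  (forall a, C4at h0 a b = (complex.Re (C4at h0 a b))%:C) /\
  (forall a, opmul q (fun c => complex.Re (C4at h0 c b)) a = (a == b)%:R).
Proof.
apply: inverse_positive_real_solution q_inverse_positive _ => a.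
by rewrite /= rmorph_nat -(opmul_C4_col h0 b a); apply: eq_bigr => c _; rewrite Q4_entry0.
Qed.

Lemma normc_C4_le h a b : normc (C4at h a b) <= complex.Re (C4at h0 a b).
Proof.
apply: (inverse_positive_dominates _ _ q_offdiag_le0 (Q4_entry_offdiag h)
          (Q4_entry_diag h) (fun c => C4at h c b)
          (fun c => complex.Re (C4at h0 c b)) q_inverse_positive) => c.
rewrite (C4_0_col b).2 opmul_C4_col.
by case: (c == b); rewrite ?normc0 ?normc1.
Qed.

Lemma Re_C4_0_le1 a b : complex.Re (C4at h0 a b) <= 1.
Proof.
case: b => j0 y0.
apply: (block_bidiag_col_le1 _ _ (fun c => complex.Re (C4at h0 c (j0, y0))) j0 y0).
  exact/one_plus_epsE_coercive/eps_ge0.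
exact: (C4_0_col (j0, y0)).2.
Qed.

End C4Bounds.

Theorem lemma6p6 (R : realType) (d L : nat) (beta : R) (hbeta : 0 < beta)
  (E : torus d L -> torus d L -> R[i])
  (hherm : herm_op E) (hpsd : psd E) (hoff : offdiag_nonpos E) :
  (forall (ntau : nat), (0 < ntau)%N ->
     forall (h : nat -> torus d L -> R) (j j' : 'I_ntau.+1) (x x' : torus d L),
       `| C4_entry beta ntau E h j x j' x' |
         <= C4_entry beta ntau E (fun _ _ => 0) j x j' x')
  /\
  (exists M : R, forall (ntau : nat), (0 < ntau)%N ->
     forall (j j' : 'I_ntau.+1) (x x' : torus d L),
       C4_entry beta ntau E (fun _ _ => 0) j x j' x' <= M%:C).
Proof.
have beta_ge0 := ltW hbeta.
have C4_0_real n b a := (C4_0_col E hherm hpsd hoff beta n beta_ge0 b).1 a.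
split=> [n _ h j j' x x' | ].
  rewrite /C4_entry C4_0_real -[`|_|]/((normc _)%:C) lecR.
  exact: (normc_C4_le E hherm hpsd hoff beta n beta_ge0).
exists 1 => n _ j j' x x'.
rewrite /C4_entry C4_0_real lecR.
exact: (Re_C4_0_le1 E hherm hpsd hoff beta n beta_ge0).
Qed.
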